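(* Let $A$ be a commutative ring, let $a_1,\ldots,a_n\in A$, let $u\in A^\times$, $b\in A$, and let $\beta:=h(u)y(ub)\in C(A)$. Then there exist unique $b_1,\ldots,b_n\in A$ satisfying \[\epsilon(b_i)\cdots\epsilon(b_1)=h(u)^{(-1)^{i-1}}\epsilon(a_i)\cdots\epsilon(a_1)\beta\quad\text{in }C(A)\text{ for all }1\le i\le n.\] Furthermore, $b_1=a_1u^2+bu$ and $b_i=u^{2(-1)^{i-1}}a_i$ for all $i\ge2$.
   Context: $C(A)$ is the group with generators $\epsilon(a)$, $a\in A$, and relations: with $h(u):=\epsilon(-u)\epsilon(-u^{-1})\epsilon(-u)$ for $u\in A^\times$, (1) $h(u)h(v)=h(uv)$; (2) $\epsilon(a)\epsilon(0)\epsilon(b)=h(-1)\epsilon(a+b)$; (3) $h(u)\epsilon(a)h(u)=\epsilon(u^2a)$. For $a\in A$, $y(a):=\epsilon(0)^3\epsilon(a)$. *)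

From HB Require Import structures.
From mathcomp Require Import all_boot all_order all_algebra.
Set Implicit Arguments. Unset Strict Implicit. Unset Printing Implicit Defensive.
Import GRing.Theory.
Local Open Scope ring_scope.

(* The group C(A), given by generators eps(a), a in A, and relations,
   is realised as the type of group terms in the generators modulo the
   smallest congruence containing the group axioms and the relations. *)

Section CA.
Variable A : comUnitRingType.

Inductive cterm : Type :=
| Eps of A
| One
| Mul of cterm & cterm
| Inv of cterm.

Definition hC (u : A) : cterm :=
  Mul (Mul (Eps (- u)) (Eps (- u^-1))) (Eps (- u)).

Inductive ceq : cterm -> cterm -> Prop :=
| ceq_refl x : ceq x x
| ceq_sym x y : ceq x y -> ceq y x
| ceq_trans x y z : ceq x y -> ceq y z -> ceq x z
| ceq_Mul x x' y y' : ceq x x' -> ceq y y' -> ceq (Mul x y) (Mul x' y')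
| ceq_Inv x x' : ceq x x' -> ceq (Inv x) (Inv x')
| ceq_assoc x y z : ceq (Mul (Mul x y) z) (Mul x (Mul y z))
| ceq_1l x : ceq (Mul One x) x
| ceq_1r x : ceq (Mul x One) x
| ceq_Vl x : ceq (Mul (Inv x) x) One
| ceq_Vr x : ceq (Mul x (Inv x)) One
| ceq_rel1 u v : u \is a GRing.unit -> v \is a GRing.unit ->
    ceq (Mul (hC u) (hC v)) (hC (u * v))
| ceq_rel2 a b : ceq (Mul (Mul (Eps a) (Eps 0)) (Eps b)) (Mul (hC (-1)) (Eps (a + b)))
| ceq_rel3 u a : u \is a GRing.unit ->
    ceq (Mul (Mul (hC u) (Eps a)) (hC u)) (Eps (u ^+ 2 * a)).

Definition yC (a : A) : cterm :=
  Mul (Mul (Mul (Eps 0) (Eps 0)) (Eps 0)) (Eps a).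

(* eprod f m = eps(f (m-1)) ... eps(f 0) (indices as ordinals of 'I_n) *)
Fixpoint eprod (n : nat) (f : 'I_n -> A) (m : nat) : cterm :=
  match m with
  | 0 => One
  | m'.+1 =>
      match @insub nat (fun k => (k < n)%N) 'I_n m' with
      | Some i => Mul (Eps (f i)) (eprod f m')
      | None => eprod f m'
      end
  end.

End CA.

From mathcomp Require Import all_boot all_order all_algebra ring.
From Stdlib Require Import Setoid Morphisms.
Set Implicit Arguments.
Unset Strict Implicit.
Unset Printing Implicit Defensive.
Import GRing.Theory.
Local Open Scope ring_scope.

(* Existence is a telescoping computation in C(A).  Relation (3) gives
   eps(u^2 a) h(u)^-1 = h(u) eps(a) and eps(u^-2 a) h(u) = h(u)^-1 eps(a), which
   move the alternating factor h(u)^(+-1) past each eps(a_i); relation (2) gives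
   eps(a) y(c) = h(-1)^2 eps(a + c) = eps(a + c), which settles i = 1.
   Uniqueness: eps(a) |-> [[a, 1], [-1, 0]] respects the relations, hence defines
   a representation of C(A) by invertible 2x2 matrices, in which
   eps(b_i) ... eps(b_1) determines b_i as the top-left entry of
   (eps(b_i) ... eps(b_1)) (eps(b_(i-1)) ... eps(b_1))^-1. *)

Local Notation "x ⋅ y" := (Mul x y) (at level 40, left associativity).
Local Notation "x ≡ y" := (ceq x y) (at level 70, no associativity).

#[export] Instance ceq_Equivalence (A : comUnitRingType) : Equivalence (@ceq A).
Proof. by split; [exact: ceq_refl | exact: ceq_sym | exact: ceq_trans]. Qed.

#[export] Instance Mul_Proper (A : comUnitRingType) :
  Proper (@ceq A ==> @ceq A ==> @ceq A) (@Mul A).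
Proof. by move=> x x' xx' y y' yy'; exact: ceq_Mul. Qed.

#[export] Hint Resolve ceq_refl : core.

Section Relations.
Variable A : comUnitRingType.
Implicit Types (x y : cterm A) (a b u v : A).

Lemma ceq_mulKV x y : Inv x ⋅ (x ⋅ y) ≡ y.
Proof. by rewrite -ceq_assoc ceq_Vl ceq_1l. Qed.

Lemma ceq_mulVK x y : y ⋅ Inv x ⋅ x ≡ y.
Proof. by rewrite ceq_assoc ceq_Vl ceq_1r. Qed.

Lemma ceq_mulK x y : y ⋅ x ⋅ Inv x ≡ y.
Proof. by rewrite ceq_assoc ceq_Vr ceq_1r. Qed.

Lemma ceq_inv_unique x y : x ⋅ y ≡ One A -> y ≡ Inv x.
Proof.
move=> xy; transitivity (Inv x ⋅ (x ⋅ y)); first by rewrite ceq_mulKV.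
by rewrite xy ceq_1r.
Qed.

Lemma ceq_idem_1 x : x ⋅ x ≡ x -> x ≡ One A.
Proof.
move=> xx; transitivity (Inv x ⋅ (x ⋅ x)); first by rewrite ceq_mulKV.
by rewrite xx ceq_Vl.
Qed.

Lemma hC1 : hC (1 : A) ≡ One A.
Proof. by apply: ceq_idem_1; rewrite ceq_rel1 ?unitr1 // mulr1. Qed.

Lemma hCV u : u \is a GRing.unit -> hC u^-1 ≡ Inv (hC u).
Proof.
by move=> u_unit; apply: ceq_inv_unique; rewrite ceq_rel1 ?unitrV // mulrV // hC1.
Qed.

Lemma hCN1_sqr : hC (-1 : A) ⋅ hC (-1) ≡ One A.
Proof. by rewrite ceq_rel1 ?unitrN1 // mulrNN mulr1 hC1. Qed.

Lemma eps_yC a b : Eps a ⋅ yC b ≡ Eps (a + b).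
Proof.
(* [!ceq_assoc] would also reassociate inside the unfolded [hC (-1)]. *)
rewrite /yC -!ceq_assoc (ceq_rel2 a 0) addr0 2!(ceq_assoc (hC _)).
by rewrite (ceq_rel2 a b) -ceq_assoc hCN1_sqr ceq_1l.
Qed.

Lemma hC_eps_hC_yC u a b : u \is a GRing.unit ->
  hC u ⋅ Eps a ⋅ (hC u ⋅ yC (u * b)) ≡ Eps (a * u ^+ 2 + b * u).
Proof.
move=> u_unit; rewrite -ceq_assoc ceq_rel3 // eps_yC.
by rewrite [u ^+ 2 * a]mulrC [u * b]mulrC.
Qed.

Lemma eps_hCV v a : v \is a GRing.unit -> Eps (v ^+ 2 * a) ⋅ Inv (hC v) ≡ hC v ⋅ Eps a.
Proof. by move=> v_unit; rewrite -ceq_rel3 // ceq_mulK. Qed.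

Lemma eps_hC v a : v \is a GRing.unit -> Eps (v^-1 ^+ 2 * a) ⋅ hC v ≡ Inv (hC v) ⋅ Eps a.
Proof. by move=> v_unit; rewrite -ceq_rel3 ?unitrV // hCV // ceq_mulVK. Qed.

Definition hCsign u (m : nat) : cterm A := if ~~ odd m then hC u else Inv (hC u).

Lemma eps_hCsign u a m : u \is a GRing.unit ->
  Eps ((if odd m then u ^+ 2 else u^-1 ^+ 2) * a) ⋅ hCsign u m ≡ hCsign u m.+1 ⋅ Eps a.
Proof. by rewrite /hCsign /=; case: (odd m) => /=; [apply: eps_hCV | apply: eps_hC]. Qed.

End Relations.

Section Products.
Variables (A : comUnitRingType) (n : nat).
Implicit Types f g : 'I_n -> A.

Lemma eprodS f {m} (lt_mn : (m < n)%N) :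
  eprod f m.+1 = Eps (f (Ordinal lt_mn)) ⋅ eprod f m.
Proof. by rewrite /= insubT. Qed.

Lemma eprod_telescope f g (S : nat -> cterm A) (x : cterm A) :
    (forall lt0n : (0 < n)%N,
       Eps (g (Ordinal lt0n)) ≡ S 0%N ⋅ Eps (f (Ordinal lt0n)) ⋅ x) ->
    (forall m (lt_m1n : (m.+1 < n)%N),
       Eps (g (Ordinal lt_m1n)) ⋅ S m ≡ S m.+1 ⋅ Eps (f (Ordinal lt_m1n))) ->
  forall m, (m < n)%N -> eprod g m.+1 ≡ S m ⋅ eprod f m.+1 ⋅ x.
Proof.
move=> g0 gS; elim=> [|m IHm] lt_mn.
  by rewrite !(eprodS _ lt_mn) /= !ceq_1r g0.
rewrite (eprodS g lt_mn) (IHm (ltnW lt_mn)) (eprodS f lt_mn).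
by rewrite -!ceq_assoc gS.
Qed.

End Products.

Section Representation.
Variables (A : comUnitRingType) (R : unitRingType) (e : A -> R).
Let hR (u : A) : R := e (- u) * e (- u^-1) * e (- u).
Hypothesis e_unit : forall a, e a \is a GRing.unit.
Hypothesis e_rel1 : forall u v, u \is a GRing.unit -> v \is a GRing.unit ->
  hR u * hR v = hR (u * v).
Hypothesis e_rel2 : forall a b, e a * e 0 * e b = hR (-1) * e (a + b).
Hypothesis e_rel3 : forall u a, u \is a GRing.unit -> hR u * e a * hR u = e (u ^+ 2 * a).

Fixpoint crepr (x : cterm A) : R :=
  match x with
  | Eps a => e a
  | One => 1
  | Mul x y => crepr x * crepr y
  | Inv x => (crepr x)^-1
  end.

Lemma crepr_unit x : crepr x \is a GRing.unit.
Proof.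
elim: x => [a||x ux y uy|x ux] /=.
- exact: e_unit.
- exact: unitr1.
- by rewrite unitrMl.
- by rewrite unitrV.
Qed.

Lemma crepr_ceq x y : x ≡ y -> crepr x = crepr y.
Proof.
elim=> {x y} /=.
- by [].
- by move=> x y _ ->.
- by move=> x y z _ -> _ ->.
- by move=> x x' y y' _ -> _ ->.
- by move=> x x' _ ->.
- by move=> x y z; rewrite mulrA.
- by move=> x /=; rewrite mul1r.
- by move=> x /=; rewrite mulr1.
- by move=> x; rewrite mulVr ?crepr_unit.
- by move=> x; rewrite mulrV ?crepr_unit.
- exact: e_rel1.
- exact: e_rel2.
- exact: e_rel3.
Qed.

End Representation.

Section Matrices.
Variable A : comUnitRingType.
Implicit Types a b c d u v : A.

Definition mx2 a b c d : 'M[A]_2 :=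
  \matrix_(i, j) if i == 0 then (if j == 0 then a else b) else (if j == 0 then c else d).

Lemma mul_mx2 a b c d a' b' c' d' :
  mx2 a b c d * mx2 a' b' c' d' =
  mx2 (a * a' + b * c') (a * b' + b * d') (c * a' + d * c') (c * b' + d * d').
Proof.
apply/matrixP => i j; rewrite !mxE !big_ord_recl big_ord0 !mxE addr0.
by case: i j => [[|[|]]] // ? [[|[|]]].
Qed.

Lemma mx2_1 : 1 = mx2 1 0 0 1.
Proof. by apply/matrixP => i j; rewrite !mxE; case: i j => [[|[|]]] // ? [[|[|]]]. Qed.

Definition epsmx a : 'M[A]_2 := mx2 a 1 (-1) 0.

Lemma epsmx_unit a : epsmx a \is a GRing.unit.
Proof.
apply/unitrP; exists (mx2 0 (-1) 1 a).
by rewrite !mul_mx2 mx2_1; split; congr mx2; ring.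
Qed.

Lemma hC_epsmx u : u \is a GRing.unit ->
  epsmx (- u) * epsmx (- u^-1) * epsmx (- u) = mx2 u 0 0 u^-1.
Proof.
move=> u_unit; have uV : u * u^-1 = 1 by rewrite mulrV.
by rewrite !mul_mx2; congr mx2; ring: uV.
Qed.

Lemma ceq_epsmx (x y : cterm A) : x ≡ y -> crepr epsmx x = crepr epsmx y.
Proof.
apply: crepr_ceq => [||a b|u a u_unit].
- exact: epsmx_unit.
- move=> u v u_unit v_unit.
  rewrite !hC_epsmx ?unitrM ?u_unit ?v_unit // mul_mx2 invrM //.
  by congr mx2; ring.
- by rewrite hC_epsmx ?unitrN1 // invrN1 !mul_mx2; congr mx2; ring.
- have uV : u * u^-1 = 1 by rewrite mulrV.
  by rewrite hC_epsmx // !mul_mx2; congr mx2; ring: uV.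
Qed.

End Matrices.

Lemma eprod_inj (A : comUnitRingType) n (f g : 'I_n -> A) :
  (forall k : 'I_n, eprod f k.+1 ≡ eprod g k.+1) -> f =1 g.
Proof.
move=> fg [m lt_mn].
have prefix : crepr (@epsmx A) (eprod f m) = crepr (@epsmx A) (eprod g m).
  by case: m lt_mn => [|m] lt_mn //; apply/ceq_epsmx/(fg (Ordinal (ltnW lt_mn))).
have := ceq_epsmx (fg (Ordinal lt_mn)); rewrite !(eprodS _ lt_mn) /= prefix.
move/(mulIr (crepr_unit (@epsmx_unit A) _))/matrixP/(_ 0 0).
by rewrite !mxE.
Qed.

Theorem proposition4p6 (A : comUnitRingType) (n : nat) (a : 'I_n -> A)
    (u : A) (b : A) (hu : u \is a GRing.unit) :
  let beta := Mul (hC u) (yC (u * b)) in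
  let P := fun bs : 'I_n -> A =>
    forall k : 'I_n,
      ceq (eprod bs k.+1)
          (Mul (Mul (if ~~ odd k then hC u else Inv (hC u)) (eprod a k.+1)) beta) in
  (exists bs : 'I_n -> A, P bs) /\
  (forall bs : 'I_n -> A, P bs ->
     forall k : 'I_n,
       bs k = (if val k == 0%N then a k * u ^+ 2 + b * u
               else (if ~~ odd k then u ^+ 2 else (u^-1) ^+ 2) * a k)).
Proof.
move=> beta P.
pose b0 (k : 'I_n) := if val k == 0%N then a k * u ^+ 2 + b * u
                      else (if ~~ odd k then u ^+ 2 else (u^-1) ^+ 2) * a k.
have P_b0 : P b0.
  move=> [m lt_mn].
  apply: (@eprod_telescope _ _ a b0 (hCsign u)) lt_mn => [?|j ?].
    by rewrite /b0 /= hC_eps_hC_yC.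
  by rewrite /b0 /= negbK; apply: eps_hCsign.
split; first by exists b0.
move=> bs P_bs; apply: eprod_inj => k.
transitivity (hCsign u k ⋅ eprod a k.+1 ⋅ beta); first exact: P_bs.
by symmetry; apply: P_b0.
Qed.
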